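(* Let $f_1,\dots,f_N:\mathbb{R}^n\to\mathbb{R}$ satisfy the standing assumptions below, let $\Phi(x)=\max_{1\le j\le N}f_j(x)$, let $x_k\in\mathbb{R}^n$, let $G\in\mathbb{R}^{N\times n}$ be the matrix whose $j$-th row is $\nabla f_j(x_k)^T$, and let $f=(f_1(x_k),\dots,f_N(x_k))^T$. If $\lambda$ is a solution of $$\min_{\lambda}\left(\tfrac12\lambda^TGG^T\lambda-f^T\lambda\right)\quad\text{s.t.}\quad \sum_{i=1}^N\lambda_i=1,\ \lambda_i\ge 0,$$ and $p=-G^T\lambda$, then $\Phi'(x_k;p)\le -\tfrac12\|p\|^2$.
   Context: Standing assumptions: (H1) there is $M\in\mathbb{R}$ with $f_j(x)\ge M$ for all $x$ and $j$; (H2) each $f_j\in C^1(\mathbb{R}^n)$ and there is a modulus of continuity $w$ (increasing $w:[0,\infty)\to[0,\infty)$, $w(0)=0$, continuous at $0$) with $\|\nabla f_j(x)-\nabla f_j(y)\|\le w(\|x-y\|)$ for all $x,y$ and $j$. For $g:\mathbb{R}^n\to\mathbb{R}$, the directional derivative is $g'(x;d)=\lim_{t\to0^+}\frac{g(x+td)-g(x)}{t}$ (for $\Phi$ this limit exists for every $x,d$). *)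

From mathcomp Require Import all_boot all_order all_algebra.
From mathcomp Require Import all_classical all_reals all_analysis.
Set Implicit Arguments. Unset Strict Implicit. Unset Printing Implicit Defensive.
Import Order.TTheory GRing.Theory Num.Theory.
Import numFieldNormedType.Exports.
Local Open Scope classical_set_scope.
Local Open Scope ring_scope.

Definition dotv {R : realType} {n : nat} (u v : 'cV[R]_n) : R :=
  \sum_(i < n) u i 0 * v i 0.
Definition sqnorm {R : realType} {n : nat} (v : 'cV[R]_n) : R := dotv v v.
Definition enorm {R : realType} {n : nat} (v : 'cV[R]_n) : R :=
  Num.sqrt (sqnorm v).

Definition grad {R : realType} {n : nat} (f : 'cV[R]_n -> R) (x : 'cV[R]_n)
  : 'cV[R]_n := \col_(i < n) ('d f x (delta_mx i 0 : 'cV[R]_n)).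

Definition modulus_of_continuity {R : realType} (w : R -> R) : Prop :=
  (forall a b, 0 <= a -> a <= b -> w a <= w b) /\ w 0 = 0 /\
  (forall a, 0 <= a -> 0 <= w a) /\
  (w t @[t --> 0^'+] --> 0).

Definition Phi {R : realType} {n N : nat} (f : 'I_N.+1 -> 'cV[R]_n -> R)
  (x : 'cV[R]_n) : R :=
  \big[Num.max/f ord0 x]_(j < N.+1) f j x.

Definition has_dirder {R : realType} {n : nat} (g : 'cV[R]_n -> R)
  (x d : 'cV[R]_n) (L : R) : Prop :=
  ((g (x + t *: d) - g x) / t) @[t --> 0^'+] --> L.

Definition simplex {R : realType} {N : nat} (l : 'cV[R]_N) : Prop :=
  \sum_(i < N) l i 0 = 1 /\ forall i, 0 <= l i 0.

Definition qp_obj {R : realType} {N n : nat} (G : 'M[R]_(N, n))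
  (fv l : 'cV[R]_N) : R :=
  2^-1 * (l^T *m G *m G^T *m l) 0 0 - dotv fv l.

(* Write v = G^T lam, so p = -v and the j-th row of G is grad f_j(x_k).
   First-order optimality of lam on the simplex, tested against the vertex
   e_j, gives  grad f_j(x_k) . v >= |v|^2 + f_j(x_k) - f^T lam  for every j.
   By Danskin's theorem Phi'(x_k; p) is the largest grad f_j(x_k) . p over the
   active indices, those with f_j(x_k) = Phi(x_k) >= f^T lam; for these the
   inequality above gives grad f_j(x_k) . p <= -|p|^2 <= -|p|^2 / 2. *)

From mathcomp Require Import all_boot all_order all_algebra.
From mathcomp Require Import all_classical all_reals all_analysis.
From mathcomp Require Import ring lra.
Import Order.TTheory GRing.Theory Num.Theory.
Import numFieldNormedType.Exports.
Local Open Scope classical_set_scope.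
Local Open Scope ring_scope.

Section InnerProduct.
Context {R : realType} {n : nat}.
Implicit Types u v w : 'cV[R]_n.

Lemma dotvE u v : dotv u v = (u^T *m v) 0 0.
Proof. by rewrite mxE; apply: eq_bigr => i _; rewrite mxE. Qed.

Lemma dotvC u v : dotv u v = dotv v u.
Proof. by apply: eq_bigr => i _; rewrite mulrC. Qed.

Lemma dotvDr u v w : dotv u (v + w) = dotv u v + dotv u w.
Proof. by rewrite /dotv -big_split; apply: eq_bigr => i _; rewrite mxE mulrDr. Qed.

Lemma dotvZr a u v : dotv u (a *: v) = a * dotv u v.
Proof. by rewrite /dotv mulr_sumr; apply: eq_bigr => i _; rewrite mxE mulrCA. Qed.

Lemma dotvNr u v : dotv u (- v) = - dotv u v.
Proof. by rewrite -scaleN1r dotvZr mulN1r. Qed.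

Lemma dotvBr u v w : dotv u (v - w) = dotv u v - dotv u w.
Proof. by rewrite dotvDr dotvNr. Qed.

Lemma dotv_delta u j : dotv u (delta_mx j 0) = u j 0.
Proof.
rewrite /dotv (bigD1 j) //= big1 ?addr0; first by rewrite mxE !eqxx mulr1.
by move=> i /negPf ji; rewrite mxE ji mulr0.
Qed.

Lemma sqnorm_ge0 v : 0 <= sqnorm v.
Proof. by apply: sumr_ge0 => i _; rewrite -expr2 sqr_ge0. Qed.

Lemma sqnormN v : sqnorm (- v) = sqnorm v.
Proof. by apply: eq_bigr => i _; rewrite mxE mulrNN. Qed.

Lemma sqnormDZ v w t :
  sqnorm (v + t *: w) = sqnorm v + 2 * t * dotv v w + t ^+ 2 * sqnorm w.
Proof.
rewrite /sqnorm /dotv !mulr_sumr -!big_split /=.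
by apply: eq_bigr => i _; rewrite !mxE; ring.
Qed.

End InnerProduct.

Section Simplex.
Context {R : realType} {N : nat}.
Implicit Types l m : 'cV[R]_N.

Lemma simplex_delta j : simplex (delta_mx j 0 : 'cV[R]_N).
Proof.
split=> [|i]; last by rewrite mxE ler0n.
rewrite (bigD1 j) //= big1 ?addr0; first by rewrite mxE !eqxx.
by move=> i /negPf ji; rewrite mxE ji.
Qed.

Lemma simplex_segment {l m t} :
  simplex l -> simplex m -> 0 <= t <= 1 -> simplex (l + t *: (m - l)).
Proof.
move=> [l1 l0] [m1 m0] /andP[t0 t1]; split=> [|i].
  under eq_bigr => i _ do rewrite !mxE.
  by rewrite big_split /= -mulr_sumr sumrB l1 m1 subrr mulr0 addr0.
by rewrite !mxE; have := l0 i; have := m0 i; nra.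
Qed.

Lemma dotv_simplex_le (c l : 'cV[R]_N) (M : R) :
  simplex l -> (forall j, c j 0 <= M) -> dotv c l <= M.
Proof.
move=> [l1 l0] cM; rewrite -[M]mulr1 -l1 mulr_sumr.
by apply: ler_sum => i _; apply: ler_wpM2r.
Qed.

End Simplex.

Lemma ge0_of_affine_ge0 {R : realFieldType} (a c : R) :
  (forall t, 0 < t <= 1 -> 0 <= a + t * c) -> 0 <= a.
Proof.
move=> affine_ge0; rewrite leNgt; apply/negP => a_lt0.
have d_gt0 : 0 < `|c| - a by have := normr_ge0 c; lra.
(* chosen so that [a + t * `|c| = t * a < 0] *)
pose t := - a / (`|c| - a).
have td : t * `|c| - t * a = - a by rewrite -mulrBr mulfVK ?gt_eqF.
have t_gt0 : 0 < t by rewrite divr_gt0 ?oppr_gt0.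
have t_le1 : t <= 1 by rewrite ler_pdivrMr // mul1r; have := normr_ge0 c; lra.
have tc : t * c <= t * `|c| by apply: ler_wpM2l; [exact: ltW | exact: ler_norm].
have ta : t * a < 0 by rewrite pmulr_rlt0.
have := affine_ge0 t; rewrite t_gt0 t_le1 => /(_ isT).
lra.
Qed.

Section DualQP.
Context {R : realType} {N n : nat} {G : 'M[R]_(N, n)} {fv : 'cV[R]_N}.

Lemma qp_objE l : qp_obj G fv l = 2^-1 * sqnorm (G^T *m l) - dotv fv l.
Proof.
by rewrite /qp_obj /sqnorm [dotv (G^T *m l) _]dotvE trmx_mul trmxK !mulmxA.
Qed.

Lemma qp_obj_segment l d t :
  qp_obj G fv (l + t *: d) = qp_obj G fv l
    + t * (dotv (G^T *m l) (G^T *m d) - dotv fv d)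
    + t ^+ 2 * (2^-1 * sqnorm (G^T *m d)).
Proof.
rewrite !qp_objE mulmxDr -scalemxAr sqnormDZ dotvDr dotvZr.
by field.
Qed.

Lemma qp_argmin_first_order {lam mu} :
  simplex lam -> simplex mu ->
  (forall l, simplex l -> qp_obj G fv lam <= qp_obj G fv l) ->
  dotv fv (mu - lam) <= dotv (G^T *m lam) (G^T *m (mu - lam)).
Proof.
move=> lam_simplex mu_simplex lam_min; rewrite -subr_ge0.
apply: (@ge0_of_affine_ge0 _ _ (2^-1 * sqnorm (G^T *m (mu - lam)))).
move=> t /andP[t_gt0 t_le1].
have t01 : 0 <= t <= 1 by rewrite ltW.
have := lam_min _ (simplex_segment lam_simplex mu_simplex t01).
rewrite qp_obj_segment -(pmulr_rge0 _ t_gt0).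
set a := _ - dotv fv _; set c := 2^-1 * _.
have -> : t * (a + t * c) = t * a + t ^+ 2 * c by ring.
lra.
Qed.

Lemma qp_argmin_vertex {lam} j :
  simplex lam -> (forall l, simplex l -> qp_obj G fv lam <= qp_obj G fv l) ->
  sqnorm (G^T *m lam) + fv j 0 - dotv fv lam <= dotv (G^T *m lam) (row j G)^T.
Proof.
move=> lam_simplex lam_min.
have := qp_argmin_first_order lam_simplex (simplex_delta j) lam_min.
by rewrite mulmxBr !dotvBr dotv_delta -colE -tr_row /sqnorm; lra.
Qed.

End DualQP.

Section MaxOfFunctions.
Context {R : realType} {n N : nat} (f : 'I_N.+1 -> 'cV[R]_n -> R).

Lemma Phi_ge j x : f j x <= Phi f x.
Proof. exact: le_bigmax. Qed.

Lemma Phi_le x c : (forall j, f j x <= c) -> Phi f x <= c.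
Proof. by move=> fc; apply: bigmax_le => // j _. Qed.

Lemma Phi_attained x : exists j, Phi f x = f j x.
Proof.
rewrite /Phi; elim/big_ind: _ => [|a b [ja ->] [jb ->]|j _]; last by exists j.
- by exists ord0.
- by case: leP => _; [exists jb | exists ja].
Qed.

Lemma Phi_active_argmax x (D : 'I_N.+1 -> R) :
  exists2 js, f js x = Phi f x & forall j, f j x = Phi f x -> D j <= D js.
Proof.
have [j0 j0_active] := Phi_attained x.
have j0_in : [pred j | f j x == Phi f x] j0 by rewrite /= j0_active.
case: (arg_maxP D j0_in) => js /eqP js_active js_max.
by exists js => // j /eqP; exact: js_max.
Qed.

End MaxOfFunctions.

Section DirectionalDerivative.
Context {R : realType} {n : nat}.
Implicit Type g : 'cV[R]_n -> R.

Lemma has_dirder_diff g x p :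
  differentiable g x -> has_dirder g x p ('d g x p).
Proof.
move=> dg; rewrite -deriveE // /has_dirder.
have -> : (fun t => (g (x + t *: p) - g x) / t) =
          (fun t => t^-1 *: ((g \o shift x) (t *: p) - g x)).
  by apply/funext => t /=; rewrite [x + _]addrC mulrC.
apply: cvg_trans _ (diff_derivable (v := p) dg); apply: cvg_app.
by apply: within_subset => t /= /gt_eqF ->.
Qed.

Lemma diff_gradE g x p : 'd g x p = dotv (grad g x) p.
Proof.
rewrite {1}(matrix_sum_delta p) linear_sum; apply: eq_bigr => i _.
by rewrite big_ord1 linearZ /= /grad mxE mulrC.
Qed.

Lemma has_dirder_cvg {g x p L} :
  has_dirder g x p L -> g (x + t *: p) @[t --> 0^'+] --> g x.
Proof.
move=> gL.
have tq0 : t * ((g (x + t *: p) - g x) / t) @[t --> 0^'+] --> 0 * L.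
  by apply: cvgM => //; exact: (cvg_at_right_filter cvg_id).
rewrite mul0r in tq0.
rewrite -[g x]addr0; apply: cvg_trans _ (cvgD (cvg_cst (g x)) tq0).
apply: near_eq_cvg; near=> t.
have t_gt0 : 0 < t by near: t; exact: nbhs_right_gt.
by rewrite fctE mulrC divfK ?gt_eqF // addrC subrK.
Unshelve. all: by end_near.
Qed.

Lemma has_dirder_near_le {g x p L} c k :
  has_dirder g x p L -> g x < c ->
  \forall t \near 0^'+, g (x + t *: p) <= c + t * k.
Proof.
move=> gL gx_lt.
have shifted_cvg : g (x + t *: p) - t * k @[t --> 0^'+] --> g x.
  have slope_cvg : t * k @[t --> 0^'+] --> 0 * k.
    by apply: cvgM; [exact: (cvg_at_right_filter cvg_id) | exact: cvg_cst].
  rewrite mul0r in slope_cvg; rewrite -[g x]subr0.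
  by apply: cvgB => //; exact: has_dirder_cvg gL.
near=> t.
suff : g (x + t *: p) - t * k < c by lra.
by near: t; exact: cvgr_lt shifted_cvg _ gx_lt.
Unshelve. all: by end_near.
Qed.

Lemma has_dirder_Phi {N} {f : 'I_N.+1 -> 'cV[R]_n -> R} {x p}
    {D : 'I_N.+1 -> R} {js} :
  (forall j, has_dirder (f j) x p (D j)) -> f js x = Phi f x ->
  (forall j, f j x = Phi f x -> D j <= D js) -> has_dirder (Phi f) x p (D js).
Proof.
move=> fD js_active js_max; apply/cvgrPdist_le => e e_gt0.
have quot_near j :
    \forall t \near 0^'+, `|D j - (f j (x + t *: p) - f j x) / t| <= e.
  by move/cvgrPdist_le : (fD j); apply.
have f_above j :
    \forall t \near 0^'+, f j (x + t *: p) <= Phi f x + t * (D js + e).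
  have [j_active | j_inactive] := eqVneq (f j x) (Phi f x).
    near=> t.
    have t_gt0 : 0 < t by near: t; exact: nbhs_right_gt.
    have : `|D j - (f j (x + t *: p) - f j x) / t| <= e.
      by near: t; exact: quot_near.
    rewrite ler_norml => /andP[quot_le _].
    have : f j (x + t *: p) - f j x <= (D j + e) * t.
      by rewrite -ler_pdivrMr //; lra.
    have : (D j + e) * t <= t * (D js + e).
      by rewrite mulrC ler_pM2l // lerD2r js_max.
    lra.
  apply: has_dirder_near_le (fD j) _.
  by rewrite lt_neqAle j_inactive Phi_ge.
have Phi_above :
    \forall t \near 0^'+, Phi f (x + t *: p) <= Phi f x + t * (D js + e).
  by apply: filterS _ (filter_forall _ f_above) => t /Phi_le.
near=> t.
have t_gt0 : 0 < t by near: t; exact: nbhs_right_gt.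
have quot_js : `|D js - (f js (x + t *: p) - f js x) / t| <= e.
  by near: t; exact: quot_near.
have quot_le :
    (f js (x + t *: p) - f js x) / t <= (Phi f (x + t *: p) - Phi f x) / t.
  by rewrite ler_pM2r ?invr_gt0 // js_active lerD2r Phi_ge.
have quot_ge : (Phi f (x + t *: p) - Phi f x) / t <= D js + e.
  rewrite ler_pdivrMr // mulrC.
  suff : Phi f (x + t *: p) <= Phi f x + t * (D js + e) by lra.
  by near: t.
move: quot_js; rewrite !ler_norml => /andP[] *; apply/andP; split; lra.
Unshelve. all: by end_near.
Qed.

End DirectionalDerivative.

Theorem theorem2 (R : realType) (n N : nat)
  (f : 'I_N.+1 -> 'cV[R]_n -> R) (M : R) (w : R -> R)
  (H1 : forall j x, M <= f j x)
  (Hdiff : forall j x, differentiable (f j) x)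
  (Hw : modulus_of_continuity w)
  (H2 : forall j x y, enorm (grad (f j) x - grad (f j) y) <= w (enorm (x - y)))
  (xk : 'cV[R]_n) (lam : 'cV[R]_N.+1) :
  let G : 'M[R]_(N.+1, n) := \matrix_(j < N.+1, i < n) grad (f j) xk i 0 in
  let fv : 'cV[R]_N.+1 := \col_(j < N.+1) f j xk in
  simplex lam ->
  (forall mu : 'cV[R]_N.+1, simplex mu -> qp_obj G fv lam <= qp_obj G fv mu) ->
  let p : 'cV[R]_n := - (G^T *m lam) in
  exists L : R, has_dirder (Phi f) xk p L /\ L <= - (2^-1 * sqnorm p).
Proof.
move=> G fv lam_simplex lam_min p.
have rowG j : (row j G)^T = grad (f j) xk.
  by apply/matrixP => i k; rewrite ord1 !mxE.
have [js js_active js_max] := Phi_active_argmax f xk (fun j => 'd (f j) xk p).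
exists ('d (f js) xk p); split.
  by apply: (has_dirder_Phi _ js_active js_max) => j; exact: has_dirder_diff.
have := qp_argmin_vertex js lam_simplex lam_min.
have : dotv fv lam <= Phi f xk.
  by apply: dotv_simplex_le lam_simplex _ => j; rewrite mxE Phi_ge.
rewrite rowG diff_gradE /p sqnormN dotvNr [dotv (grad _ _) _]dotvC.
rewrite mxE js_active.
have := sqnorm_ge0 (G^T *m lam).
lra.
Qed.
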